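(* For every integer $k\ge 0$, the number of projection-surjective subgroups of $Z_2^k$ is $$n_k=\sum_{i=0}^k(-1)^{i+k}\binom{k}{i}\sum_{j=0}^i{\binom{i}{j}}_2,\qquad\text{where}\qquad {\binom{i}{j}}_2=\frac{\prod_{l=0}^{j-1}\left(2^{i-l}-1\right)}{\prod_{l=1}^j\left(2^l-1\right)}.$$
   Context: A subgroup $H$ of $Z_2^k=Z_2\times\cdots\times Z_2$ is projection-surjective if its image under each of the $k$ coordinate projections $Z_2^k\to Z_2$ is all of $Z_2$. *)

From HB Require Import structures.
From mathcomp Require Import all_boot all_order all_algebra all_fingroup.
Set Implicit Arguments. Unset Strict Implicit. Unset Printing Implicit Defensive.
Import GRing.Theory Num.Theory.
Local Open Scope ring_scope.

(* Z_2^k is modelled as the finite additive group of row vectors 'rV['F_2]_k;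
   its canonical finGroupType structure (from finalg) has the group law = +. *)

Definition coord_proj (k : nat) (i : 'I_k) (v : 'rV['F_2]_k) : 'F_2 := v ord0 i.

Definition proj_surjective (k : nat) (H : {set 'rV['F_2]_k}) : bool :=
  [forall i : 'I_k, coord_proj i @: H == [set: 'F_2]].

Definition gauss2 (i j : nat) : rat :=
  (\prod_(l < j) ((2 ^ (i - l))%:R - 1)) / (\prod_(1 <= l < j.+1) ((2 ^ l)%:R - 1)).

(* Subgroups of Z_2^k are exactly the F_2-subspaces of 'rV['F_2]_k.  A subspace is
   projection-surjective iff no coordinate vanishes identically on it, so by
   inclusion-exclusion over the set S of coordinates forced to vanish,
   n_k = \sum_S (-1)^|S| N(k - |S|), where N(r) is the number of subspaces of an
   r-dimensional space.  Counting ordered bases, an r-dimensional space has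
   \prod_(l<j) (2^r - 2^l) / \prod_(l<j) (2^j - 2^l) subspaces of dimension j,
   which is the Gaussian binomial [r choose j]_2; grouping the sets S by size
   gives the formula. *)

From mathcomp Require Import all_boot all_order all_algebra all_fingroup.
From mathcomp Require Import mxabelem.
Set Implicit Arguments. Unset Strict Implicit. Unset Printing Implicit Defensive.
Import GRing.Theory Num.Theory.
Local Open Scope ring_scope.

Section RowFreeCount.
Variable F : finFieldType.

Lemma row_free_col_mx1 m j (v : 'rV[F]_m) (B : 'M[F]_(j, m)) :
  row_free B -> row_free (col_mx v B) = ~~ (v <= B)%MS.
Proof.
move=> freeB; rewrite /row_free eqn_leq rank_leq_row /=.
rewrite -(leq_add2r (\rank (v :&: B)%MS)) -addsmxE mxrank_sum_cap (eqnP freeB).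
rewrite addnAC leq_add2r add1n.
by rewrite (ltn_leqif (mxrank_leqif_sup _)) ?capmxSl // sub_capmx submx_refl.
Qed.

Lemma row_free_dsubmx m1 m2 n (A : 'M[F]_(m1 + m2, n)) :
  row_free A -> row_free (dsubmx A).
Proof.
rewrite -{1}(vsubmxK A) -!row_leq_rank -addsmxE => le_m_A.
rewrite -(leq_add2l m1); apply: leq_trans le_m_A _.
exact: leq_trans (mxrank_adds_leqif _ _) (leq_add (rank_leq_row _) _).
Qed.

Lemma card_row_free_sub m r j (U : 'M[F]_(r, m)) :
  #|[set A : 'M[F]_(j, m) | row_free A && (A <= U)%MS]| =
  (\prod_(l < j) (#|F| ^ \rank U - #|F| ^ l))%N.
Proof.
elim: j => [|j IHj].
  rewrite big_ord0; apply: (@eq_card1 _ 0) => A.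
  by rewrite !inE [A]flatmx0 /row_free mxrank0 sub0mx !eqxx.
rewrite big_ord_recr /= -IHj -sum_nat_const -sum1_card -[j.+1]/(1 + j)%N.
rewrite (partition_big dsubmx
  [in [set B : 'M[F]_(j, m) | row_free B && (B <= U)%MS]]) => [|A]; last first.
  rewrite !inE => /andP[/row_free_dsubmx-> sAU] /=.
  by move: sAU; rewrite -{1}(vsubmxK A) col_mx_sub => /andP[].
apply: eq_bigr => B; rewrite inE => /andP[freeB sBU].
rewrite (reindex (col_mx^~ B)) /=; last first.
  exists usubmx => [v _ | A /andP[_ /eqP <-]]; first by rewrite col_mxKu.
  by rewrite vsubmxK.
transitivity #|rowg U :\: rowg B|.
  rewrite -sum1_card; apply: eq_bigl => v.
  by rewrite !inE col_mxKd eqxx andbT col_mx_sub sBU andbT row_free_col_mx1 // andbC.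
by rewrite cardsD (setIidPr _) ?rowgS // !card_rowg (eqnP freeB).
Qed.

Lemma card_row_free_eqmx j m (B : 'M[F]_(j, m)) : row_free B ->
  #|[set A : 'M[F]_(j, m) | row_free A && (A == B)%MS]| =
  #|[set g : 'M[F]_j | row_free g]|.
Proof.
move=> freeB; rewrite -(card_imset _ (row_free_injr freeB)).
apply: eq_card => A; rewrite inE; apply/andP/imsetP => [[freeA /andP[sAB _]] | [g]].
  case/submxP: sAB => g defA; exists g => //.
  by rewrite inE /row_free -(mxrankMfree g freeB) -defA.
rewrite inE => freeg ->; split; first by rewrite /row_free mxrankMfree.
by apply/eqmxP; apply: eqmxMfull; rewrite row_full_unit -row_free_unit.
Qed.

Lemma card_row_free j m :
  #|[set A : 'M[F]_(j, m) | row_free A]| = (\prod_(l < j) (#|F| ^ m - #|F| ^ l))%N.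
Proof.
have := card_row_free_sub j (1%:M : 'M[F]_m); rewrite mxrank1 => <-.
by apply: eq_card => A; rewrite !inE submx1 andbT.
Qed.

Lemma eqrowgE m1 m2 n (A : 'M[F]_(m1, n)) (B : 'M[F]_(m2, n)) :
  (rowg A == rowg B) = (A == B)%MS.
Proof. by rewrite eqEsubset !rowgS. Qed.

End RowFreeCount.

Section SubgroupCount.
Variables p n : nat.
Local Notation V := 'rV['F_p]_n.

Lemma card_row_free_rowg j (L : {group V}) : \rank (rowg_mx L) = j ->
  #|[set A : 'M['F_p]_(j, n) | row_free A && (rowg A == L)]| =
  #|[set g : 'M['F_p]_j | row_free g]|.
Proof.
move=> <-; rewrite -(card_row_free_eqmx (row_base_free (rowg_mx L))).
by apply: eq_card => A; rewrite !inE -[X in rowg A == X](rowg_mxK L) eqrowgE !eq_row_base.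
Qed.

Lemma card_row_free_sub_subgroups r j (U : 'M['F_p]_(r, n)) :
  #|[set A : 'M['F_p]_(j, n) | row_free A && (A <= U)%MS]| =
  (#|[set L : {group V} | (L \subset rowg U) && (\rank (rowg_mx L) == j)]| *
   #|[set g : 'M['F_p]_j | row_free g]|)%N.
Proof.
rewrite -sum_nat_const -sum1_card.
rewrite (partition_big (fun A => [group of rowg A])
  [in [set L : {group V} | (L \subset rowg U) && (\rank (rowg_mx L) == j)]])
  => [|A]; last first.
  by rewrite !inE => /andP[freeA sAU]; rewrite rowgS sAU rowgK.
apply: eq_bigr => L; rewrite inE => /andP[sLU /eqP rankL].
rewrite -(card_row_free_rowg rankL) -sum1_card; apply: eq_bigl => A; rewrite !inE.
rewrite -andbA; apply: andb_id2l => _; rewrite -[_ == L]/(rowg A == L).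
by apply/andb_idl => /eqP defL; rewrite -rowgS defL sLU.
Qed.

Lemma card_subgroups_rowg r (U : 'M['F_p]_(r, n)) : prime p ->
  (#|[set L : {group V} | L \subset rowg U]|%:R : rat) =
  \sum_(j < (\rank U).+1)
    (\prod_(l < j) (p ^ \rank U - p ^ l))%:R / (\prod_(l < j) (p ^ j - p ^ l))%:R.
Proof.
move=> p_pr; rewrite -sum1_card natr_sum.
rewrite (partition_big (fun L : {group V} =>
  inord (\rank (rowg_mx L)) : 'I_(\rank U).+1) xpredT) //=.
apply: eq_bigr => j _; have := card_row_free_sub_subgroups j U.
rewrite card_row_free_sub card_row_free card_Fp // => ->.
rewrite natrM mulfK; last first.
  rewrite pnatr_eq0 -lt0n prodn_gt0 // => l.
  by rewrite subn_gt0 ltn_exp2l ?prime_gt1.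
rewrite -natr_sum sum1_card; congr _%:R.
apply: eq_card => L; rewrite -topredE /= !inE.
case sLU: (L \subset rowg U) => //=.
have lt_rank : (\rank (rowg_mx L) < (\rank U).+1)%N.
  by rewrite ltnS -(rowgK U) mxrankS ?rowg_mxS.
by rewrite -(inj_eq val_inj) /= inordK.
Qed.

End SubgroupCount.

Lemma natr_prod_expnB (R : comPzRingType) q m j : (0 < q)%N -> (j <= m)%N ->
  ((\prod_(l < j) (q ^ m - q ^ l))%:R : R) =
  \prod_(l < j) (q ^ l)%:R * \prod_(l < j) ((q ^ (m - l))%:R - 1).
Proof.
move=> q_gt0 le_jm; rewrite natr_prod -big_split; apply: eq_bigr => l _ /=.
have le_lm : (l <= m)%N by apply: leq_trans (ltnW (ltn_ord l)) le_jm.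
rewrite -{1}(subnKC le_lm) expnD natrB ?leq_pmulr ?expn_gt0 ?q_gt0 //.
by rewrite natrM mulrBr mulr1.
Qed.

Lemma gauss2_card r j :
  (\prod_(l < j) (2 ^ r - 2 ^ l))%:R / (\prod_(l < j) (2 ^ j - 2 ^ l))%:R = gauss2 r j.
Proof.
rewrite /gauss2; have [le_jr | lt_rj] := leqP j r; last first.
  rewrite (bigD1 (Ordinal lt_rj)) //= subnn mul0n mul0r.
  by rewrite (bigD1 (Ordinal lt_rj)) //= subnn expn0 subrr !mul0r.
rewrite !natr_prod_expnB // -mulf_div divff ?mul1r; last first.
  by apply/prodf_neq0 => l _; rewrite pnatr_eq0 expn_eq0.
congr (_ / _); rewrite big_add1 big_mkord [LHS](reindex_inj rev_ord_inj).
by apply: eq_bigr => l _ /=; rewrite subKn.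
Qed.

Section CoordSubspace.
Variables (F : fieldType) (k : nat).
Implicit Type S : {set 'I_k}.

Definition coord_subspace S : 'M[F]_k :=
  (\sum_(i | i \notin S) <<delta_mx 0 i : 'rV[F]_k>>)%MS.

Lemma sub_coord_subspace S (v : 'rV[F]_k) :
  (v <= coord_subspace S)%MS = [forall i in S, v 0 i == 0].
Proof.
apply/idP/forall_inP => [sv i iS | v_S].
  have : (v <= kermx (delta_mx i 0 : 'M[F]_(k, 1)))%MS.
    apply: submx_trans sv _; apply/sumsmx_subP => j jS; rewrite genmxE.
    apply/sub_kermxP; rewrite mul_delta_mx_cond.
    by case: eqP => [ji | _]; [rewrite ji iS in jS | rewrite mulr0n].
  by move/sub_kermxP; rewrite -colE => /matrixP /(_ 0 0); rewrite !mxE => ->.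
rewrite [v]row_sum_delta; apply: summx_sub => i _.
have [iS | niS] := boolP (i \in S); first by rewrite (eqP (v_S i iS)) scale0r sub0mx.
by apply/scalemx_sub/(sumsmx_sup i); rewrite ?genmxE.
Qed.

Lemma rank_coord_subspace S : \rank (coord_subspace S) = (k - #|S|)%N.
Proof.
have /mxdirectP-> :=
  @mxdirect_delta F 'I_k (fun i => i \notin S) k id (fun _ _ _ _ => id).
rewrite -[k in (k - _)%N]card_ord -[in RHS](setCK S) -cardsCs -sum1_card.
by apply: eq_big => [i | i _]; rewrite ?inE //= mxrank_gen mxrank_delta.
Qed.

End CoordSubspace.

Section ZeroCoords.
Variables (F : finFieldType) (k : nat).

Definition zero_coords (H : {set 'rV[F]_k}) : {set 'I_k} :=
  [set i | [forall v in H, v 0 i == 0]].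

Lemma subset_zero_coords (S : {set 'I_k}) (H : {set 'rV[F]_k}) :
  (S \subset zero_coords H) = (H \subset rowg (coord_subspace F S)).
Proof.
apply/subsetP/subsetP => [sSZ v Hv | sHS i iS].
  rewrite inE sub_coord_subspace; apply/forall_inP => i iS.
  by have := sSZ i iS; rewrite inE => /forall_inP; apply.
rewrite inE; apply/forall_inP => v Hv.
by have := sHS v Hv; rewrite inE sub_coord_subspace => /forall_inP; apply.
Qed.

End ZeroCoords.

Lemma F2_neq0 (x : 'F_2) : (x != 0) = (x == 1).
Proof. by case: x => [[|[|]]]. Qed.

Lemma proj_surjectiveE k (H : {group 'rV['F_2]_k}) :
  proj_surjective H = (zero_coords H == set0).
Proof.
apply/forallP/eqP => [surjH | noZH i].
  apply/setP => i; rewrite !inE; apply/negbTE/forall_inPn.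
  have /imsetP[v Hv v_i] : (1 : 'F_2) \in coord_proj i @: H.
    by rewrite (eqP (surjH i)) inE.
  by exists v; rewrite // -[v 0 i]/(coord_proj i v) -v_i oner_eq0.
have : i \notin zero_coords H by rewrite noZH inE.
rewrite inE => /forall_inPn[v Hv v_i].
rewrite eqEsubset subsetT /=; apply/subsetP => x _; apply/imsetP.
have [-> | ] := eqVneq x 0; first by exists 0; [exact: group1 | rewrite /coord_proj mxE].
rewrite F2_neq0 => /eqP ->; exists v => //.
by apply/esym/eqP; rewrite -F2_neq0.
Qed.

Section InclusionExclusion.
Variable I : finType.

Lemma sum_subset_card (R : nmodType) (B : {set I}) (f : nat -> R) :
  \sum_(S : {set I} | S \subset B) f #|S| = \sum_(i < #|B|.+1) f i *+ 'C(#|B|, i).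
Proof.
rewrite (partition_big (fun S : {set I} => inord #|S| : 'I_#|B|.+1) xpredT) //=.
apply: eq_bigr => i _; rewrite -cards_draws -sumr_const.
apply: eq_big => [S | S /andP[sSB /eqP <-]]; rewrite ?inE; last first.
  by rewrite inordK // ltnS subset_leq_card.
have [sSB | //] := boolP (S \subset B).
by rewrite -(inj_eq val_inj) /= inordK // ltnS subset_leq_card.
Qed.

Lemma sum_subset_sign (R : pzRingType) (B : {set I}) :
  \sum_(S : {set I} | S \subset B) (-1) ^+ #|S| = (B == set0)%:R :> R.
Proof.
rewrite sum_subset_card -cards_eq0 -expr0n -[in RHS](subrr (1 : R)).
rewrite exprDn_comm; last exact/commr_sym/commr1.
by apply: eq_bigr => i _; rewrite expr1n mul1r.
Qed.

Lemma card_set0_incl_excl (R : pzRingType) (T : finType) (f : T -> {set I}) :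
  (#|[set x | f x == set0]|%:R : R) =
  \sum_(S : {set I}) (-1) ^+ #|S| * #|[set x | S \subset f x]|%:R.
Proof.
transitivity (\sum_(x : T) \sum_(S : {set I} | S \subset f x) ((-1) ^+ #|S| : R)).
  rewrite -sum1_card natr_sum big_mkcond /=; apply: eq_bigr => x _.
  by rewrite sum_subset_sign inE; case: (_ == _).
rewrite (exchange_big_dep xpredT) //=; apply: eq_bigr => S _.
by rewrite mulr_natr -sumr_const; apply: eq_bigl => x; rewrite inE.
Qed.

End InclusionExclusion.

Lemma card_subgroups_zero_coords k (S : {set 'I_k}) :
  (#|[set H : {group 'rV['F_2]_k} | S \subset zero_coords H]|%:R : rat) =
  \sum_(j < (k - #|S|).+1) gauss2 (k - #|S|) j.
Proof.
have -> : [set H : {group 'rV['F_2]_k} | S \subset zero_coords H] =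
          [set H : {group _} | H \subset rowg (coord_subspace _ S)].
  by apply/setP => H; rewrite !inE subset_zero_coords.
rewrite card_subgroups_rowg // rank_coord_subspace.
by apply: eq_bigr => j _; apply: gauss2_card.
Qed.

Theorem mainTheorem5 (k : nat) :
  (#|[set H : {group 'rV['F_2]_k} | proj_surjective H]|%:R : rat) =
  \sum_(i < k.+1) (-1) ^+ (i + k) * ('C(k, i))%:R * \sum_(j < i.+1) gauss2 i j.
Proof.
have -> : [set H : {group 'rV['F_2]_k} | proj_surjective H] =
          [set H : {group _} | zero_coords H == set0].
  by apply/setP => H; rewrite !inE proj_surjectiveE.
pose term n := (-1) ^+ n * \sum_(j < (k - n).+1) gauss2 (k - n) j.
rewrite card_set0_incl_excl.
transitivity (\sum_(S : {set 'I_k} | S \subset setT) term #|S|).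
  by apply: eq_big => [S | S _]; rewrite ?subsetT ?card_subgroups_zero_coords.
rewrite sum_subset_card cardsT card_ord [RHS](reindex_inj rev_ord_inj).
apply: eq_bigr => i _; have le_ik : (i <= k)%N := ltn_ord i.
rewrite /term /= subSS bin_sub //.
have -> : (-1) ^+ (k - i + k) = (-1) ^+ i :> rat.
  by rewrite -signr_odd oddD oddB // addbAC addbb addFb signr_odd.
by rewrite mulrAC mulr_natr.
Qed.
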